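(* Let $X$ be a finite connected poset and $F$ a field with $\mathrm{char}(F)\notin\{2,3\}$. Let $\varphi:I(X,F)\to I(X,F)$ be a bijective $F$-linear map with $\varphi(fgf)=\varphi(f)\varphi(g)\varphi(f)$ for all $f,g$. Then $\varphi=r\psi$, where $r\in\{-1,1\}$ and $\psi$ is either an automorphism or an anti-automorphism of $I(X,F)$.
   Context: $I(X,F)$ is the incidence algebra of the locally finite poset $X$ over $F$ (functions $f:X\times X\to F$ vanishing unless $x\le y$, with product $(fg)(x,y)=\sum_{x\le z\le y}f(x,z)g(z,y)$). A poset is connected if any two elements are joined by a finite sequence of elements in which consecutive elements are comparable. *)

From HB Require Import structures.
From mathcomp Require Import all_boot all_order all_algebra.
Set Implicit Arguments. Unset Strict Implicit. Unset Printing Implicit Defensive.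
Import Order.TTheory GRing.Theory.
Local Open Scope ring_scope.
Local Open Scope order_scope.

Section Incidence.
Variables (d : Order.disp_t) (X : finPOrderType d) (F : fieldType).

Definition is_incid (f : {ffun X * X -> F^o}) : bool :=
  [forall p : X * X, ~~ (p.1 <= p.2)%O ==> (f p == 0%R)].

Definition incid : {pred {ffun X * X -> F^o}} := fun f => is_incid f.

Record incalg := IncAlg { ifun :> {ffun X * X -> F^o}; ifunP : ifun \in incid }.

HB.instance Definition _ := [isSub for ifun].
HB.instance Definition _ := [Choice of incalg by <:].


Lemma incid_submod_closed : submod_closed incid.
Proof.
split; first by apply/forallP => p; rewrite ffunE eqxx implybT.
move=> a f g /forallP fP /forallP gP; apply/forallP => p; apply/implyP => np.
by rewrite !ffunE (eqP (implyP (fP p) np)) (eqP (implyP (gP p) np)) scaler0 add0r.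
Qed.

HB.instance Definition _ := GRing.isSubmodClosed.Build F _
  incid incid_submod_closed.
HB.instance Definition _ := [SubChoice_isSubLmodule of incalg by <:].

Definition imul_fun (f g : incalg) : {ffun X * X -> F^o} :=
  [ffun p : X * X => (\sum_(z : X | (p.1 <= z)%O && (z <= p.2)%O) f (p.1, z) * g (z, p.2))%R].

Lemma imul_incid f g : is_incid (imul_fun f g).
Proof.
apply/forallP => [[x y]]; apply/implyP => /= nxy; rewrite ffunE /=.
rewrite big_pred0 // => z; apply/negbTE; apply: contra nxy => /andP[h1 h2].
exact: le_trans h2.
Qed.

Definition imul (f g : incalg) : incalg := IncAlg (imul_incid f g).

Definition ione_fun : {ffun X * X -> F^o} := [ffun p : X * X => ((p.1 == p.2)%:R)%R].
Lemma ione_incid : is_incid ione_fun.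
Proof.
apply/forallP => [[x y]]; apply/implyP => /= nxy; rewrite ffunE /=.
by case: (x =P y) nxy => [->|_ _]; rewrite ?lexx.
Qed.
Definition ione : incalg := IncAlg ione_incid.

End Incidence.

Definition poset_connected d (X : finPOrderType d) : Prop :=
  forall x y : X, connect (fun a b : X => (a >=< b)%O) x y.

Definition inc_automorphism d (X : finPOrderType d) (F : fieldType)
    (psi : incalg X F -> incalg X F) : Prop :=
  [/\ linear psi, bijective psi,
      (forall f g, psi (imul f g) = imul (psi f) (psi g)) &
      psi (ione X F) = ione X F].

Definition inc_antiautomorphism d (X : finPOrderType d) (F : fieldType)
    (psi : incalg X F -> incalg X F) : Prop :=
  [/\ linear psi, bijective psi,
      (forall f g, psi (imul f g) = imul (psi g) (psi f)) &
      psi (ione X F) = ione X F].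

(* Let phi be such a map of I(X,F), X finite and connected.  Then u = phi 1
   is central with u^2 = 1, hence u = c 1 with c = 1 or -1 (the center of
   I(X,F) consists of scalars), and psi = c phi is moreover unital.  For psi:
   - the images E_z of the diagonal units e_zz are orthogonal idempotents
     whose corners E_z I E_z are lines, so that a E_z b = 0 forces
     a E_z = 0 or E_z b = 0;
   - the image P_xy of each e_xy (x < y) lies either in E_x I E_y
     ("forward") or in E_y I E_x (the Peirce decomposition together with
     P_xy^2 = 0);
   - generators sharing an endpoint point the same way, so by connectedness
     all point the same way; psi is then multiplicative on the matrix units
     (into I(X,F) or into its opposite ring), hence everywhere by bilinearity. *)

From HB Require Import structures.
From mathcomp Require Import all_boot all_order all_algebra.
Set Implicit Arguments. Unset Strict Implicit. Unset Printing Implicit Defensive.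
Import Order.TTheory GRing.Theory.
Local Open Scope ring_scope.

Lemma connect_transport (T : finType) (r : rel T) (Q : T -> Prop) :
  (forall a b, r a b -> Q a -> Q b) -> forall a b, connect r a b -> Q a -> Q b.
Proof.
move=> step a b /connectP[p]; elim: p a => [|c p IH] a /=; first by move=> _ ->.
by case/andP => rac pc lastb Qa; apply: IH pc lastb (step a c rac Qa).
Qed.

Section IncidenceAlgebra.
Variables (d : Order.disp_t) (X : finPOrderType d) (F : fieldType).
Local Notation A := (incalg X F).

Lemma incid_out (f : A) (x y : X) : ~~ (x <= y)%O -> f (x, y) = 0.
Proof. by move=> nxy; have /forallP/(_ (x, y))/implyP/(_ nxy)/eqP := ifunP f. Qed.

Lemma incalg_ext (f g : A) : (forall x y, f (x, y) = g (x, y)) -> f = g.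
Proof. by move=> fg; apply: val_inj; apply/ffunP => -[x y]; apply: fg. Qed.

Lemma addE (f g : A) x y : (f + g) (x, y) = f (x, y) + g (x, y).
Proof. by rewrite /= ffunE. Qed.

Lemma scaleE (c : F) (f : A) x y : (c *: f) (x, y) = c * f (x, y).
Proof. by rewrite /= ffunE. Qed.

Lemma zeroE x y : (0 : A) (x, y) = 0.
Proof. by rewrite /= ffunE. Qed.

Lemma sumE I (r : seq I) (P : pred I) (G : I -> A) x y :
  (\sum_(i <- r | P i) G i) (x, y) = \sum_(i <- r | P i) G i (x, y).
Proof. by elim/big_rec2: _ => [|i s t _ IH]; rewrite ?zeroE // addE IH. Qed.

(* The convolution sum may be taken over all of X, since f and g vanish
   outside the order relation. *)
Lemma imulE (f g : A) x y : imul f g (x, y) = \sum_z f (x, z) * g (z, y).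
Proof.
rewrite /= ffunE /= big_mkcond /=; apply: eq_bigr => z _.
by case: ifP => // /negbT; rewrite negb_and => /orP[] /incid_out ->;
  rewrite ?mul0r ?mulr0.
Qed.

Lemma ioneE x y : ione X F (x, y) = (x == y)%:R.
Proof. by rewrite /= ffunE. Qed.

Lemma imulA : associative (@imul d X F).
Proof.
move=> f g h; apply: incalg_ext => x y; rewrite !imulE.
under eq_bigr do rewrite imulE mulr_sumr.
under [RHS]eq_bigr do rewrite imulE mulr_suml.
by rewrite exchange_big; apply: eq_bigr => z _; apply: eq_bigr => w _; rewrite mulrA.
Qed.

Lemma imul1l : left_id (ione X F) (@imul d X F).
Proof.
move=> f; apply: incalg_ext => x y; rewrite imulE (bigD1 x) //= big1 ?addr0.
  by rewrite ioneE eqxx mul1r.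
by move=> z /negbTE zx; rewrite ioneE eq_sym zx mul0r.
Qed.

Lemma imul1r : right_id (ione X F) (@imul d X F).
Proof.
move=> f; apply: incalg_ext => x y; rewrite imulE (bigD1 y) //= big1 ?addr0.
  by rewrite ioneE eqxx mulr1.
by move=> z /negbTE zy; rewrite ioneE zy mulr0.
Qed.

Lemma imulDl : left_distributive (@imul d X F) +%R.
Proof.
move=> f g h; apply: incalg_ext => x y; rewrite addE !imulE -big_split /=.
by apply: eq_bigr => z _; rewrite addE mulrDl.
Qed.

Lemma imulDr : right_distributive (@imul d X F) +%R.
Proof.
move=> f g h; apply: incalg_ext => x y; rewrite addE !imulE -big_split /=.
by apply: eq_bigr => z _; rewrite addE mulrDr.
Qed.

(* I(X,F) is a ring (possibly the zero ring, when X is empty, so it cannot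
   be given the algebra structures of the library, which are nontrivial). *)
HB.instance Definition _ :=
  GRing.Zmodule_isPzRing.Build A imulA imul1l imul1r imulDl imulDr.

Lemma mulE (f g : A) : f * g = imul f g. Proof. by []. Qed.
Lemma oneE : (1 : A) = ione X F. Proof. by []. Qed.

Lemma scalerAl_inc (c : F) (f g : A) : c *: (f * g) = (c *: f) * g.
Proof.
apply: incalg_ext => x y; rewrite scaleE !imulE mulr_sumr.
by apply: eq_bigr => z _; rewrite scaleE mulrA.
Qed.

Lemma scalerAr_inc (c : F) (f g : A) : c *: (f * g) = f * (c *: g).
Proof.
apply: incalg_ext => x y; rewrite scaleE !imulE mulr_sumr.
by apply: eq_bigr => z _; rewrite scaleE mulrCA.
Qed.

Definition eunit_fun (x y : X) : {ffun X * X -> F^o} :=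
  [ffun p : X * X => (((p.1 == x) && (p.2 == y)) && (x <= y)%O)%:R].

Lemma eunit_incid x y : is_incid (eunit_fun x y).
Proof.
apply/forallP => -[p q]; apply/implyP => /= npq; rewrite ffunE /=.
move: npq; case: (p =P x) => [->|] //=; case: (q =P y) => [->|] //=.
by move/negbTE ->.
Qed.

Definition eunit x y : A := IncAlg (eunit_incid x y).

Lemma eunitE x y p q : eunit x y (p, q) = (((p == x) && (q == y)) && (x <= y)%O)%:R.
Proof. by rewrite /= ffunE. Qed.

Lemma eunit_eq0 x y : ~~ (x <= y)%O -> eunit x y = 0.
Proof.
by move=> nxy; apply: incalg_ext => p q; rewrite eunitE zeroE (negbTE nxy) andbF.
Qed.

Lemma eunit_neq0 x y : (x <= y)%O -> eunit x y != 0.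
Proof.
move=> lxy; apply/eqP => /(congr1 (fun f : A => f (x, y))).
by rewrite eunitE zeroE !eqxx lxy => /eqP; rewrite oner_eq0.
Qed.

Lemma mul_eunitE (a : A) x y p q : (x <= y)%O ->
  (a * eunit x y) (p, q) = a (p, x) * (q == y)%:R.
Proof.
move=> lxy; rewrite mulE imulE (bigD1 x) //= big1 ?addr0.
  by rewrite eunitE eqxx lxy !andbT.
by move=> z /negbTE zx; rewrite eunitE zx mulr0.
Qed.

Lemma eunit_mulE (b : A) x y p q : (x <= y)%O ->
  (eunit x y * b) (p, q) = (p == x)%:R * b (y, q).
Proof.
move=> lxy; rewrite mulE imulE (bigD1 y) //= big1 ?addr0.
  by rewrite eunitE eqxx lxy !andbT.
by move=> z /negbTE zy; rewrite eunitE zy andbF mul0r.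
Qed.

Lemma mul_eunit_mulE (a b : A) z p q : (a * eunit z z * b) (p, q) = a (p, z) * b (z, q).
Proof.
rewrite mulE imulE (bigD1 z) //= big1 ?addr0.
  by rewrite mul_eunitE // eqxx mulr1.
by move=> w /negbTE wz; rewrite mul_eunitE // wz mulr0 mul0r.
Qed.

Lemma eunit_mul x y u v : (x <= y)%O -> (u <= v)%O ->
  eunit x y * eunit u v = if y == u then eunit x v else 0.
Proof.
move=> lxy luv; apply: incalg_ext => p q; rewrite eunit_mulE // eunitE.
case: (y =P u) => [yu|_]; last by rewrite zeroE mulr0.
subst u; rewrite luv eunitE (le_trans lxy luv) !andbT -natrM.
by case: (p == x); case: (q == v).
Qed.

Lemma incalg_decomp (f : A) : f = \sum_(pq : X * X) (f pq : F) *: eunit pq.1 pq.2.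
Proof.
apply: incalg_ext => p q; rewrite sumE (bigD1 (p, q)) // big1 ?addr0.
  rewrite scaleE eunitE !eqxx /= addr0.
  by case: (boolP (p <= q)%O) => [_|/incid_out ->]; rewrite ?mulr1 ?mulr0.
move=> [a b] ne; rewrite scaleE eunitE.
by case: (p =P a) ne => [<-|]; case: (q =P b) => [<-|]; rewrite ?eqxx ?mulr0.
Qed.

Lemma one_sum_eunit : (1 : A) = \sum_z eunit z z.
Proof.
apply: incalg_ext => p q; rewrite sumE oneE ioneE (bigD1 p) //= big1 ?addr0.
  by rewrite eunitE eqxx lexx andbT eq_sym.
by move=> z /negbTE zp; rewrite eunitE eq_sym zp.
Qed.

Lemma eunit_sandwich (a : A) z :
  eunit z z * a * eunit z z = (a (z, z) : F) *: eunit z z.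
Proof.
apply: incalg_ext => p q; rewrite mul_eunitE // eunit_mulE // scaleE eunitE lexx andbT.
by case: (p == z); case: (q == z); rewrite ?mul0r ?mulr0 ?mul1r ?mulr1.
Qed.

Lemma incalg_neq0 (f : A) : f != 0 -> exists p q, f (p, q) != 0.
Proof.
move=> nz; have /existsP[[p q] fpq] : [exists pq, f pq != 0]; last by exists p, q.
apply: contraNT nz => /existsPn f0.
by apply/eqP/incalg_ext => p q; rewrite zeroE; apply/eqP; rewrite -[_ == _]negbK f0.
Qed.

Lemma mul_eunit_neq0 (a : A) z : a * eunit z z != 0 -> exists p, a (p, z) != 0.
Proof.
case/incalg_neq0 => p [q]; rewrite mul_eunitE //.
by move=> apq; exists p; apply: contraNneq apq => ->; rewrite mul0r.
Qed.

Lemma eunit_mul_neq0 (b : A) z : eunit z z * b != 0 -> exists q, b (z, q) != 0.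
Proof.
case/incalg_neq0 => p [q]; rewrite eunit_mulE //.
by move=> bzq; exists q; apply: contraNneq bzq => ->; rewrite mulr0.
Qed.

(* Let E be an idempotent whose corner E I(X,F) E is the line F E.  Then
   no product a E b vanishes unless a E or E b does: writing E as a
   multiple of E e_zz E for a suitable z, the entry (p, q) of a E b is a
   nonzero multiple of (a E)(p, z) (E b)(z, q). *)
Lemma rank_one_corner_mul_neq0 (E a b : A) : E * E = E ->
    (forall c, exists k : F, E * c * E = k *: E) ->
  a * E != 0 -> E * b != 0 -> a * E * b != 0.
Proof.
move=> idemE cornerE aE0 Eb0.
have E_sum : E = \sum_z E * eunit z z * E.
  by rewrite -mulr_suml -mulr_sumr -one_sum_eunit mulr1 idemE.
have [z Ez0] : exists z, E * eunit z z * E != 0.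
  apply/existsP; apply: contraNT aE0 => /existsPn Ez0.
  by rewrite E_sum big1 ?mulr0 // => z _; apply/eqP; rewrite -[_ == _]negbK Ez0.
have [k Ek] := cornerE (eunit z z).
have k0 : k != 0 by apply: contraNneq Ez0 => k0; rewrite Ek k0 scale0r.
have E_eq : E = k^-1 *: (E * eunit z z * E) by rewrite Ek scalerA mulVf // scale1r.
have [p aEpz] : exists p, (a * E) (p, z) != 0.
  apply: mul_eunit_neq0; apply: contra aE0 => /eqP aEz0.
  by rewrite E_eq -scalerAr_inc !mulrA aEz0 mul0r scaler0.
have [q Ebzq] : exists q, (E * b) (z, q) != 0.
  apply: eunit_mul_neq0; apply: contra Eb0 => /eqP zEb0.
  by rewrite E_eq -scalerAl_inc -!mulrA zEb0 !mulr0 scaler0.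
have -> : a * E * b = k^-1 *: (a * E * eunit z z * (E * b)).
  by rewrite {1}E_eq -scalerAr_inc -scalerAl_inc !mulrA.
apply/eqP => /(congr1 (fun f : A => f (p, q))).
rewrite scaleE mul_eunit_mulE zeroE => /eqP.
by rewrite !mulf_eq0 invr_eq0 (negbTE k0) (negbTE aEpz) (negbTE Ebzq).
Qed.

(* Over a connected poset, the center of I(X,F) consists of the scalars:
   commuting with e_xy kills the off-diagonal entries for x <> y and
   equalizes the diagonal entries at comparable x, y. *)
Lemma central_scalar (e : A) : poset_connected X ->
  (forall h, h * e = e * h) -> forall x, e = (e (x, x) : F) *: (1 : A).
Proof.
move=> conn central x.
have off_diag p q : p != q -> e (p, q) = 0.
  move=> pq; have := congr1 (fun f : A => f (p, q)) (central (eunit p p)).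
  by rewrite /= mul_eunitE // eunit_mulE // eqxx eq_sym (negbTE pq) mulr0 mul1r.
have diag_le p q : (p <= q)%O -> e (p, p) = e (q, q).
  move=> lpq; have := congr1 (fun f : A => f (p, q)) (central (eunit p q)).
  by rewrite /= mul_eunitE // eunit_mulE // !eqxx mulr1 mul1r.
have diag q : e (q, q) = e (x, x).
  apply: (connect_transport (Q := fun c => e (c, c) = e (x, x))) (conn x q) _ => //.
  by move=> a c /orP[/diag_le|/diag_le] <-.
apply: incalg_ext => p q; rewrite scaleE oneE ioneE.
have [<-|pq] := eqVneq p q; first by rewrite diag mulr1.
by rewrite off_diag // mulr0.
Qed.

(* A central element of square 1 is 1 or -1 times the identity.  (When X is
   empty I(X,F) is the zero ring and any such c works.) *)
Lemma central_involution (e : A) : poset_connected X ->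
  (forall h, h * e = e * h) -> e * e = 1 -> exists c : F, c * c = 1 /\ e = c *: (1 : A).
Proof.
move=> conn central ee; case: (pickP (fun _ : X => true)) => [x _|noX].
  have ex := central_scalar conn central x.
  exists (e (x, x)); split=> //.
  have := congr1 (fun f : A => f (x, x)) ee.
  rewrite {1 2}ex -scalerAl_inc -scalerAr_inc scalerA mul1r.
  by rewrite scaleE oneE ioneE eqxx mulr1.
by exists 1; split; [rewrite mulr1 | apply: incalg_ext => p; have := noX p].
Qed.

Lemma mul_expand (I J : finType) (al : I -> F) (be : J -> F) (U : I -> A) (V : J -> A) :
  (\sum_i al i *: U i) * (\sum_j be j *: V j) =
  \sum_i \sum_j (al i * be j) *: (U i * V j).
Proof.
rewrite mulr_suml; apply: eq_bigr => i _; rewrite mulr_sumr; apply: eq_bigr => j _.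
by rewrite -scalerAl_inc -scalerAr_inc scalerA.
Qed.

End IncidenceAlgebra.

Section TriplePreserving.
Variables (R S : pzRingType) (psi : R -> S).
Hypothesis psiD : {morph psi : a b / a + b}.
Hypothesis psi1 : psi 1 = 1.
Hypothesis psi_triple : forall f g, psi (f * g * f) = psi f * psi g * psi f.

Lemma triple0 : psi 0 = 0.
Proof. by apply/(addrI (psi 0)); rewrite -psiD !addr0. Qed.

Lemma triple_sq f : psi (f * f) = psi f * psi f.
Proof. by have := psi_triple f 1; rewrite !mulr1 psi1 mulr1. Qed.

(* Linearizing the square gives the Jordan product f g + g f ... *)
Lemma triple_jordan f g : psi (f * g + g * f) = psi f * psi g + psi g * psi f.
Proof.
have sq_sum (T : pzRingType) (a b : T) :
    (a + b) * (a + b) = a * a + (a * b + b * a) + b * b.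
  by rewrite mulrDl !mulrDr !addrA.
have := triple_sq (f + g).
rewrite sq_sum psiD psiD [psi (f + g)]psiD sq_sum !triple_sq.
by move/addIr/addrI.
Qed.

(* ... and linearizing the triple product gives f g h + h g f. *)
Lemma triple_lin f g h :
  psi (f * g * h + h * g * f) = psi f * psi g * psi h + psi h * psi g * psi f.
Proof.
have tri_sum (T : pzRingType) (a b c : T) :
    (a + b) * c * (a + b) = a * c * a + (a * c * b + b * c * a) + b * c * b.
  by rewrite mulrDl !mulrDr !mulrDl !addrA; congr (_ + _); rewrite addrAC.
have := psi_triple (f + h) g.
rewrite tri_sum psiD psiD [psi (f + h)]psiD tri_sum !psi_triple.
by move/addIr/addrI.
Qed.

Lemma triple_idem e : e * e = e -> psi e * psi e = psi e.
Proof. by move=> ee; rewrite -triple_sq ee. Qed.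

Lemma triple_orth e e' : e * e = e -> e * e' = 0 -> e' * e = 0 ->
  psi e * psi e' = 0.
Proof.
move=> ee ee' e'e.
have sym0 : psi e * psi e' + psi e' * psi e = 0.
  by rewrite -triple_jordan ee' e'e addr0 triple0.
have tri0 : psi e * psi e' * psi e = 0 by rewrite -psi_triple ee' mul0r triple0.
have := congr1 (GRing.mul (psi e)) sym0.
by rewrite mulrDr mulr0 !mulrA triple_idem // tri0 addr0.
Qed.

Lemma triple_converse f g :
  (psi (f * g * f) : S^c) = (psi f : S^c) * (psi g : S^c) * (psi f : S^c).
Proof. by rewrite psi_triple; exact: esym (@mulrA S _ _ _). Qed.

End TriplePreserving.

Section MatrixUnitImages.
Variables (d : Order.disp_t) (X : finPOrderType d) (F : fieldType).
Variables (S : pzRingType) (psi : incalg X F -> S).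
Hypothesis psiD : {morph psi : a b / a + b}.
Hypothesis psi1 : psi 1 = 1.
Hypothesis psi_triple : forall f g, psi (f * g * f) = psi f * psi g * psi f.
Local Notation E z := (psi (eunit F z z)).
Local Notation P x y := (psi (eunit F x y)).

Lemma E_idem z : E z * E z = E z.
Proof. by apply: triple_idem => //; rewrite eunit_mul // eqxx. Qed.

Lemma E_orth x y : x != y -> E x * E y = 0.
Proof.
move=> xy; apply: triple_orth => //; first by rewrite eunit_mul // eqxx.
  by rewrite eunit_mul // (negbTE xy).
by rewrite eunit_mul // eq_sym (negbTE xy).
Qed.

Lemma mul_E_orth a x y : x != y -> a * E x * E y = 0.
Proof. by move=> xy; rewrite -mulrA E_orth // mulr0. Qed.

Lemma forward_basis_mul :
    (forall x y, (x < y)%O -> P x y = E x * P x y * E y) ->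
  forall x y u v, psi (eunit F x y * eunit F u v) = P x y * P u v.
Proof.
move=> fwd x y u v; have psi0 := triple0 psiD.
have [lxy|/eunit_eq0 ->] := boolP (x <= y)%O; last by rewrite mul0r psi0 mul0r.
have [luv|/eunit_eq0 ->] := boolP (u <= v)%O; last by rewrite mulr0 psi0 mulr0.
have fwd_le a b : (a <= b)%O -> P a b = E a * P a b * E b.
  rewrite le_eqVlt => /predU1P[<-|/fwd //]; by rewrite !E_idem.
rewrite eunit_mul //; have [yu|yu] := eqVneq y u; last first.
  by rewrite psi0 [P x y]fwd_le // [P u v]fwd_le // !mulrA mul_E_orth // !mul0r.
subst u; have := triple_jordan psiD psi1 psi_triple (eunit F x y) (eunit F y v).
rewrite !eunit_mul // eqxx; have [vx|vx] := eqVneq v x.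
  move: luv; rewrite vx => lyx; have xy : x = y by apply/le_anti; rewrite lxy lyx.
  by rewrite -xy E_idem.
rewrite addr0 => ->.
suff -> : P y v * P x y = 0 by rewrite addr0.
by rewrite [P y v]fwd_le // [P x y]fwd_le // !mulrA mul_E_orth // !mul0r.
Qed.

End MatrixUnitImages.

Section TriplePreservingIncidence.
Variables (d : Order.disp_t) (X : finPOrderType d) (F : fieldType).
Local Notation A := (incalg X F).
Variable psi : A -> A.
Hypothesis psi_lin : linear psi.
Hypothesis psi_bij : bijective psi.
Hypothesis psi1 : psi 1 = 1.
Hypothesis psi_triple : forall f g, psi (f * g * f) = psi f * psi g * psi f.

HB.instance Definition _ := GRing.isLinear.Build F A A *:%R psi psi_lin.

Local Notation E z := (psi (eunit F z z)).
Local Notation P x y := (psi (eunit F x y)).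
Local Notation E_idem := (E_idem psi1 psi_triple).
Local Notation E_orth := (E_orth (linearD psi) psi1 psi_triple).
Local Notation mul_E_orth := (mul_E_orth (linearD psi) psi1 psi_triple).
Local Notation jordan := (triple_jordan (linearD psi) psi1 psi_triple).

Lemma P_neq0 x y : (x <= y)%O -> P x y != 0.
Proof.
by move=> lxy; rewrite -(linear0 psi) (inj_eq (bij_inj psi_bij)) eunit_neq0.
Qed.

(* Each corner E_z I(X,F) E_z is the line F E_z, because psi is onto and
   e_zz f e_zz = f(z, z) e_zz. *)
Lemma E_corner z b : exists k : F, E z * b * E z = k *: E z.
Proof.
have [psiV _ psiK] := psi_bij; exists (psiV b (z, z)).
by rewrite -[in LHS](psiK b) -psi_triple eunit_sandwich linearZ.
Qed.

Lemma E_cross z a b : a * E z != 0 -> E z * b != 0 -> a * E z * b != 0.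
Proof. by apply: rank_one_corner_mul_neq0; [exact: E_idem | exact: E_corner]. Qed.

Definition links (a : A) (s t : X) : Prop := a = E s * a * E t.

Lemma links_corner a s t : links (E s * a * E t) s t.
Proof. by rewrite /links !mulrA E_idem -[in RHS]mulrA E_idem. Qed.

Lemma links_E s : links (E s) s s.
Proof. by rewrite /links !E_idem. Qed.

Lemma links_mul0 a b s t s' t' :
  links a s t -> links b s' t' -> t != s' -> a * b = 0.
Proof. by move=> -> -> ts; rewrite !mulrA mul_E_orth // !mul0r. Qed.

Lemma links_mul_neq0 a b s t t' :
  links a s t -> links b t t' -> a != 0 -> b != 0 -> a * b != 0.
Proof.
move=> la lb a0 b0.
have aE : a * E t = a by rewrite [in LHS]la -mulrA E_idem -la.
have Eb : E t * b = b by rewrite [in LHS]lb !mulrA E_idem -lb.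
by rewrite -aE -Eb mulrA E_cross // ?aE ?Eb.
Qed.

(* The Peirce decomposition of the image of e_xy, x < y, obtained from the
   linearized triple identity with e_xy = e_xx e_xy e_yy. *)
Lemma peirce_split x y : (x < y)%O -> P x y = E x * P x y * E y + E y * P x y * E x.
Proof.
move=> lt_xy; have le_xy := ltW lt_xy.
rewrite -(triple_lin (linearD psi) psi_triple); congr psi.
rewrite [eunit F y y * _]eunit_mul // eq_sym (lt_eqF lt_xy) mul0r addr0.
by rewrite eunit_mul // eqxx eunit_mul // eqxx.
Qed.

(* The image of e_xy either links x to y ("forward") or y to x: both
   Peirce components cannot be nonzero, since their product vanishes. *)
Definition forward x y : bool := P x y == E x * P x y * E y.

Lemma backward x y : (x < y)%O -> ~~ forward x y -> links (P x y) y x.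
Proof.
move=> lt_xy not_fwd; have split := peirce_split lt_xy.
have xy : x != y by rewrite lt_eqF.
have yx : y != x by rewrite eq_sym.
have PP : P x y * P x y = 0.
  by rewrite -(triple_sq psi1 psi_triple) eunit_mul ?ltW // (negbTE yx) linear0.
have ExP : E x * P x y = E x * P x y * E y.
  by rewrite {1}split mulrDr !mulrA E_idem (E_orth xy) !mul0r addr0.
have PEx : P x y * E x = E y * P x y * E x.
  by rewrite {1}split mulrDl (mul_E_orth _ yx) add0r -mulrA E_idem.
have [U0|U0] := eqVneq (E x * P x y * E y) 0.
  by rewrite /links {1}split U0 add0r.
have [V0|V0] := eqVneq (E y * P x y * E x) 0.
  by move: not_fwd; rewrite /forward {1}split V0 addr0 eqxx.
have := links_mul_neq0 (links_corner _ _ _) (links_corner _ _ _) U0 V0.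
by rewrite -ExP -PEx mulrA -(mulrA (E x)) PP mulr0 mul0r eqxx.
Qed.

(* Two generators sharing an endpoint cannot point in opposite directions:
   in each configuration, the Jordan product of their images is computed
   once from the multiplication table of the matrix units and once from the
   links, and exactly one of the two answers is zero. *)
Lemma forward_shared x y u v : (x < y)%O -> (u < v)%O ->
  [|| x == u, x == v, y == u | y == v] -> forward x y -> ~~ forward u v -> False.
Proof.
move=> lt_xy lt_uv shared /eqP la /(backward lt_uv) lb.
have a0 := P_neq0 (ltW lt_xy); have b0 := P_neq0 (ltW lt_uv).
have yx : y != x by rewrite gt_eqF.
have vu : v != u by rewrite gt_eqF.
have := jordan (eunit F x y) (eunit F u v); rewrite !eunit_mul ?ltW //.
have [xu|xu] := eqVneq x u.
  subst u; have [yv|yv] := eqVneq y v.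
    subst v => _; move: a0; rewrite la (links_mul0 (links_E x) lb) ?mul0r ?eqxx //.
    by rewrite eq_sym.
  rewrite (negbTE yx) (negbTE vu) addr0 linear0 (links_mul0 la lb yv) add0r.
  by move/esym/eqP; apply/negP: (links_mul_neq0 lb la b0 a0).
have [xv|xv] := eqVneq x v.
  subst v; have lt_uy := lt_trans lt_uv lt_xy.
  rewrite (gt_eqF lt_uy) add0r (links_mul0 la lb yx).
  rewrite (links_mul0 lb la) 1?eq_sym // addr0.
  by move/eqP; apply/negP: (P_neq0 (ltW lt_uy)).
have [yu|yu] := eqVneq y u.
  subst u; have lt_xv := lt_trans lt_xy lt_uv.
  rewrite addr0 (links_mul0 lb la yx).
  rewrite (links_mul0 la lb) 1?eq_sym // addr0.
  by move/eqP; apply/negP: (P_neq0 (ltW lt_xv)).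
move: shared; rewrite (negbTE xu) (negbTE xv) (negbTE yu) /= => /eqP yv; subst v.
rewrite addr0 linear0 (links_mul0 lb la) 1?eq_sym //.
by rewrite addr0 => /esym/eqP; apply/negP: (links_mul_neq0 la lb a0 b0).
Qed.

Lemma forward_eq x y u v : (x < y)%O -> (u < v)%O ->
  [|| x == u, x == v, y == u | y == v] -> forward x y = forward u v.
Proof.
move=> lt_xy lt_uv shared; case fxy: (forward x y); case fuv: (forward u v) => //.
  by case: (forward_shared lt_xy lt_uv shared fxy); rewrite fuv.
case: (forward_shared lt_uv lt_xy _ fuv); last by rewrite fxy.
move: shared; rewrite (eq_sym x u) (eq_sym x v) (eq_sym y u) (eq_sym y v).
by case/or4P => ->; rewrite ?orbT.
Qed.

Definition oriented_at (w : X) (b : bool) : Prop :=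
  forall x y, (x < y)%O -> (x == w) || (y == w) -> forward x y = b.

(* The direction at a vertex propagates to every comparable vertex, through
   the generator joining them. *)
Lemma oriented_at_step b a c : (a >=< c)%O -> oriented_at a b -> oriented_at c b.
Proof.
move=> cmp_ac at_a x y lt_xy at_c.
have [ac|ac] := eqVneq a c; first by subst c; apply: at_a.
have [m [M [lt_mM m_a m_c]]] : exists m M,
    [/\ (m < M)%O, (m == a) || (M == a) & (m == c) || (M == c)].
  case/orP: cmp_ac => le; [exists a, c | exists c, a];
    by rewrite !eqxx ?orbT lt_neqAle le ?andbT // eq_sym.
rewrite -(at_a m M lt_mM m_a); apply: forward_eq => //.
by case/orP: at_c => /eqP->; case/orP: m_c => /eqP->; rewrite eqxx ?orbT.
Qed.

Lemma forward_constant : poset_connected X ->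
  exists b, forall x y, (x < y)%O -> forward x y = b.
Proof.
move=> conn; have [[x0 y0] /= lt0|none] := pickP (fun p : X * X => (p.1 < p.2)%O).
  exists (forward x0 y0) => x y lt_xy.
  have at_x0 : oriented_at x0 (forward x0 y0).
    move=> u v lt_uv at_u; apply: forward_eq => //.
    by case/orP: at_u => ->; rewrite ?orbT.
  have := connect_transport (@oriented_at_step _) (conn x0 x) at_x0.
  by move/(_ x y lt_xy); rewrite eqxx; apply.
by exists true => x y lt_xy; move: (none (x, y)); rewrite /= lt_xy.
Qed.

Lemma psi_decomp f : psi f = \sum_(p : X * X) (f p : F) *: P p.1 p.2.
Proof.
rewrite {1}[f]incalg_decomp linear_sum.
by apply: eq_bigr => p _; rewrite linearZ.
Qed.

Lemma psi_mul_expand f g : psi (f * g) =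
  \sum_(p : X * X) \sum_(q : X * X)
     (f p * g q : F) *: psi (eunit F p.1 p.2 * eunit F q.1 q.2).
Proof.
rewrite {1}[f]incalg_decomp {1}[g]incalg_decomp mul_expand linear_sum.
by apply: eq_bigr => p _; rewrite linear_sum; apply: eq_bigr => q _; rewrite linearZ.
Qed.

Lemma mul_of_basis :
    (forall x y u v, psi (eunit F x y * eunit F u v) = P x y * P u v) ->
  forall f g, psi (f * g) = psi f * psi g.
Proof.
move=> basis f g; rewrite psi_mul_expand !psi_decomp mul_expand.
by apply: eq_bigr => p _; apply: eq_bigr => q _; rewrite basis.
Qed.

Lemma antimul_of_basis :
    (forall x y u v, psi (eunit F x y * eunit F u v) = P u v * P x y) ->
  forall f g, psi (f * g) = psi g * psi f.
Proof.
move=> basis f g; rewrite psi_mul_expand !psi_decomp mul_expand exchange_big.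
by apply: eq_bigr => q _; apply: eq_bigr => p _; rewrite basis mulrC.
Qed.

(* Main step: psi is multiplicative or antimultiplicative, according to the
   common direction of the generators.  In the backward case psi is
   multiplicative into the opposite ring. *)
Theorem triple_preserving_mul_or_antimul : poset_connected X ->
  (forall f g, psi (f * g) = psi f * psi g) \/
  (forall f g, psi (f * g) = psi g * psi f).
Proof.
move=> conn; have [[] orient] := forward_constant conn; [left | right].
  apply/mul_of_basis/(forward_basis_mul (linearD psi) psi1 psi_triple).
  by move=> x y /orient/eqP.
apply: antimul_of_basis => x y u v.
apply: (forward_basis_mul (S := A^c) (psi := psi) (linearD psi) psi1
          (triple_converse psi_triple)).
move=> a b lt_ab; have /negbT/(backward lt_ab) {1}-> := orient a b lt_ab.
exact: esym (@mulrA A (E b) (P a b) (E a)).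
Qed.

End TriplePreservingIncidence.

(* For a surjective triple-preserving map of a ring, u = phi 1 is a central
   element of square 1: the triple identity with f = 1 says that every
   phi g equals u (phi g) u. *)
Lemma triple_unit (R : pzRingType) (phi : R -> R) :
    (forall h, exists g, phi g = h) ->
    (forall f g, phi (f * g * f) = phi f * phi g * phi f) ->
  phi 1 * phi 1 = 1 /\ forall h, h * phi 1 = phi 1 * h.
Proof.
move=> phi_onto phi_triple.
have sandwich h : h = phi 1 * h * phi 1.
  by have [g <-] := phi_onto h; rewrite -phi_triple mulr1 mul1r.
have uu : phi 1 * phi 1 = 1 by rewrite [RHS]sandwich mulr1.
by split=> // h; rewrite {1}[h]sandwich -mulrA uu mulr1.
Qed.

Theorem proposition6p5 (d : Order.disp_t) (X : finPOrderType d) (F : fieldType)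
    (phi : incalg X F -> incalg X F) :
  poset_connected X ->
  2%N \notin [pchar F] -> 3%N \notin [pchar F] ->
  linear phi -> bijective phi ->
  (forall f g : incalg X F,
      phi (imul (imul f g) f) = imul (imul (phi f) (phi g)) (phi f)) ->
  exists r : F, (r = 1 \/ r = -1) /\
    exists psi : incalg X F -> incalg X F,
      (inc_automorphism psi \/ inc_antiautomorphism psi) /\
      forall f, phi f = r *: psi f.
Proof.
(* phi 1 = c 1 with c^2 = 1; then psi = c phi is a unital triple-preserving
   bijection, hence an automorphism or an anti-automorphism, and phi = c psi. *)
move=> conn _ _ phi_lin [phiV phiK phiVK] phi_triple.
have [uu u_central] := triple_unit (fun h => ex_intro _ (phiV h) (phiVK h)) phi_triple.
have [c [cc phi1]] := central_involution conn u_central uu.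
pose psi f := c *: phi f.
have psiK f : c *: psi f = phi f by rewrite /psi scalerA cc scale1r.
have psi_lin : linear psi by move=> a f g; rewrite /psi phi_lin scalerDr !scalerA mulrC.
have psi_bij : bijective psi.
  exists (fun f => phiV (c *: f)) => f; first by rewrite psiK phiK.
  by rewrite /psi phiVK scalerA cc scale1r.
have psi1 : psi 1 = 1 by rewrite /psi phi1 scalerA cc scale1r.
have psi_triple f g : psi (f * g * f) = psi f * psi g * psi f.
  by rewrite /psi phi_triple -!(scalerAl_inc, scalerAr_inc) !scalerA cc mul1r.
exists c; split.
  by have := sqrf_eq1 c; rewrite expr2 cc eqxx => /esym/orP[]/eqP; [left | right].
exists psi; split; last by move=> f; rewrite psiK.
have := triple_preserving_mul_or_antimul psi_lin psi_bij psi1 psi_triple conn.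
by case=> psi_mul; [left | right]; split.
Qed.
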